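(* Let $p$ be prime, $n\ge1$, $G=G(p,n)$ the Heisenberg group acting on $X=\mathbb{Z}_p^{n+2}$ by matrix–vector multiplication with permutation representation $V=\mathbb{C}^X$, and let $H=\{(0,0,z):z\in\mathbb{Z}_p\}$ be the center of $G$. Then the coset identification problem for $H$ (given oracle access to the permutation matrix of an unknown $a=(x,y,z)\in G$, determine the coset $aH$, i.e. determine $x$ and $y$) can be solved by a single-query quantum algorithm with success probability $1$.
   Context: $G(p,n)$ is the group of $(n+2)\times(n+2)$ matrices over $\mathbb{Z}_p$ with $1$'s on the diagonal whose only other nonzero entries lie in the first row and last column, identified with triples $(x,y,z)$, $x,y\in\mathbb{Z}_p^n$, $z\in\mathbb{Z}_p$, where $(1,x,z)$ is the first row and $(z,y,1)^T$ the last column. A single-query algorithm consists of $N\ge1$, a unit vector $\psi\in V\otimes\mathbb{C}^N$, a unitary $U_1$ and a POVM indexed by the cosets of $H$; it succeeds with probability $\frac1{|G|}\sum_a\langle\psi_a|E_{aH}|\psi_a\rangle$ where $\psi_a=U_1(\pi(a)\otimes I)\psi$. *)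

From HB Require Import structures.
From mathcomp Require Import all_boot all_order all_algebra all_fingroup all_field.
Set Implicit Arguments. Unset Strict Implicit. Unset Printing Implicit Defensive.
Import Order.TTheory GRing.Theory Num.Theory.
Local Open Scope ring_scope.

Section LinAlg.
Variable T : finType.

Definition dotp (u v : T -> algC) : algC := \sum_i (u i)^* * v i.

Definition opapp (A : T -> T -> algC) (v : T -> algC) : T -> algC :=
  fun i => \sum_j A i j * v j.

Definition q_unit_vec (v : T -> algC) : Prop := dotp v v = 1.

(* U^* U = I (equivalent to unitarity in finite dimension) *)
Definition q_unitary (U : T -> T -> algC) : Prop :=
  forall i j, \sum_k (U k i)^* * U k j = (i == j)%:R.

(* positive semidefinite: <v, A v> is real and >= 0 for all v *)
Definition q_psd (A : T -> T -> algC) : Prop :=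
  forall v : T -> algC, 0 <= dotp v (opapp A v).

Definition q_povm (I : finType) (S : {set I}) (E : I -> T -> T -> algC) : Prop :=
  (forall c, c \in S -> q_psd (E c)) /\
  (forall i j, \sum_(c in S) E c i j = (i == j)%:R).
End LinAlg.

Definition mat (p n : nat) := 'M['F_p]_(n.+2).

Definition Xsp (p n : nat) := 'cV['F_p]_(n.+2).

Definition heis (p n : nat) : {set mat p n} :=
  [set A : mat p n | [forall i, forall j,
      ((i == j) ==> (A i j == 1)) &&
      (((i != j) && (i != ord0) && (j != ord_max)) ==> (A i j == 0))]].

(* H = {(0,0,z)}: elements of G whose only nonzero off-diagonal entry is at
   (first row, last column) *)
Definition heisH (p n : nat) : {set mat p n} :=
  [set A in heis p n | [forall i, forall j,
      ((i != j) && ~~ ((i == ord0) && (j == ord_max))) ==> (A i j == 0)]].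

Definition lcoset (p n : nat) (a : mat p n) : {set mat p n} :=
  [set a *m h | h in heisH p n].

Definition cosetsH (p n : nat) : {set {set mat p n}} :=
  [set lcoset a | a in heis p n].

(* pi(a) (x) I_N on V (x) C^N, V = C^X, pi(a) e_x = e_{a x} *)
Definition piI (p n N : nat) (a : mat p n) : (Xsp p n * 'I_N) -> (Xsp p n * 'I_N) -> algC :=
  fun yj xk => ((yj.1 == a *m xk.1) && (yj.2 == xk.2))%:R.

Definition psi_a (p n N : nat) (U : (Xsp p n * 'I_N) -> (Xsp p n * 'I_N) -> algC)
  (psi : (Xsp p n * 'I_N) -> algC) (a : mat p n) : (Xsp p n * 'I_N) -> algC :=
  opapp U (opapp (@piI p n N a) psi).

Definition success_prob (p n N : nat) (psi : (Xsp p n * 'I_N) -> algC)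
  (U : (Xsp p n * 'I_N) -> (Xsp p n * 'I_N) -> algC)
  (E : {set mat p n} -> (Xsp p n * 'I_N) -> (Xsp p n * 'I_N) -> algC) : algC :=
  (#|heis p n|%:R)^-1 *
    \sum_(a in heis p n) dotp (psi_a U psi a) (opapp (E (lcoset a)) (psi_a U psi a)).

(* Query the oracle on the superposition sum_v omega^(v_0) |v>|mid v> over the
   vectors v with last coordinate 1, where mid v keeps the coordinates 1..n.
   The oracle a = (x, y, z) sends v to (v_0 + x.mid v + z, mid v + y, 1).
   Subtracting the ancilla from the register leaves y in the middle of the
   register, and the phase omega^(v_0) becomes omega^(w_0 - z - x.mid v) for
   the new first coordinate w_0: a character of mid v that the Fourier
   transform of the ancilla turns into the label x.  Every other amplitude is
   a sum which a translation multiplies by a nontrivial root of unity, hence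
   vanishes, so the computational basis measurement reads off x and y. *)
From Pilot Require Import Defs.
From HB Require Import structures.
From mathcomp Require Import all_boot all_order all_algebra all_fingroup all_field.
From mathcomp Require Import ring.
Import Order.TTheory GRing.Theory Num.Theory.
Local Open Scope ring_scope.
Set Implicit Arguments. Unset Strict Implicit.

Lemma sum_eq0_rot (T : finType) (R : idomainType) (c : R) (f : T -> R) (h : T -> T) :
  c != 1 -> injective h -> (forall x, f (h x) = c * f x) -> \sum_x f x = 0.
Proof.
move=> c_neq1 h_inj fh.
have e : \sum_x f x = c * \sum_x f x.
  by rewrite {1}(reindex_inj h_inj) mulr_sumr; apply: eq_bigr => x _; rewrite fh.
have /eqP : (1 - c) * \sum_x f x = 0 by rewrite mulrBl mul1r -e subrr.
by rewrite mulf_eq0 subr_eq0 eq_sym (negbTE c_neq1) => /eqP.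
Qed.

Section AdditiveCharacter.
Variable p : nat.

(* 'F_p is the ordinal type 'I_(Zp_trunc (pdiv p)).+2, so omega has order #|'F_p|. *)
Definition omega : algC :=
  sval (C_prim_root_exists (ltn0Sn (Zp_trunc (pdiv p)).+1)).

Lemma omega_prim : (Zp_trunc (pdiv p)).+2.-primitive_root omega.
Proof. exact: svalP (C_prim_root_exists _). Qed.

Definition addchar (t : 'F_p) : algC := omega ^+ t.

Lemma addcharD (s t : 'F_p) : addchar (s + t) = addchar s * addchar t.
Proof.
by rewrite /addchar -exprD -(prim_expr_mod omega_prim) /= modn_mod (prim_expr_mod omega_prim).
Qed.

Lemma addchar0 : addchar 0 = 1.
Proof. by rewrite /addchar expr0. Qed.

Lemma addchar1_neq1 : addchar 1 != 1.
Proof. by rewrite /addchar /= modn_small // -(prim_order_dvd omega_prim) dvdn1. Qed.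

Lemma conj_addchar (t : 'F_p) : (addchar t)^* = addchar (- t).
Proof.
have norm_omega : `|omega| = 1.
  apply/eqP; rewrite -(pexpr_eq1 (ltn0Sn (Zp_trunc (pdiv p)).+1)) ?normr_ge0 //.
  by rewrite -normrX (prim_expr_order omega_prim) normr1.
have conjK : (addchar t)^* * addchar t = 1.
  by rewrite -normCKC /addchar normrX norm_omega !expr1n.
have invK : addchar (- t) * addchar t = 1 by rewrite -addcharD addNr addchar0.
by rewrite -[LHS]mulr1 -invK mulrCA conjK mulr1.
Qed.

End AdditiveCharacter.

Lemma ord0_neq_max n : (ord0 : 'I_n.+2) != ord_max.
Proof. by rewrite -(inj_eq val_inj). Qed.

Lemma ord0_max_false n (i : 'I_n.+2) : (i == ord0) && (i == ord_max) = false.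
Proof. by case: (i =P ord0) => // ->; rewrite (negbTE (ord0_neq_max n)). Qed.

Section MiddleCoordinates.
Variables (R : pzRingType) (n : nat).
Implicit Types (v : 'cV[R]_n.+2) (i : 'I_n.+2).

Definition mid i := (i != ord0) && (i != ord_max).

Definition midv v : 'cV[R]_n.+2 := \col_i (if mid i then v i 0 else 0).

Lemma midvD u v : midv (u + v) = midv u + midv v.
Proof. by apply/matrixP => i j; rewrite !mxE; case: (mid i); rewrite ?addr0. Qed.

Lemma midvZ c v : midv (c *: v) = c *: midv v.
Proof. by apply/matrixP => i j; rewrite !mxE; case: (mid i); rewrite ?mulr0. Qed.

Lemma midv_id v : midv (midv v) = midv v.
Proof. by apply/matrixP => i j; rewrite !mxE; case: (mid i). Qed.

Lemma midv_delta0 : midv (delta_mx ord0 0) = 0.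
Proof.
apply/matrixP => i j; rewrite !mxE /mid.
by case: (i =P ord0) => [->|_] //=; case: (_ != _).
Qed.

Lemma midv_delta i : mid i -> midv (delta_mx i 0) = delta_mx i 0.
Proof.
move=> mid_i; apply/matrixP => k j; rewrite !mxE ord1; case mid_k: (mid k) => //.
by case: (k =P i) => // eki; move: mid_k; rewrite eki mid_i.
Qed.

End MiddleCoordinates.

Section ColumnDot.
Variables (R : comPzRingType) (m : nat).
Implicit Types (u v w : 'cV[R]_m).

Definition dotv u v : R := \sum_i u i 0 * v i 0.

Lemma dotvC u v : dotv u v = dotv v u.
Proof. by apply: eq_bigr => i _; rewrite mulrC. Qed.

Lemma dotvD u v w : dotv u (v + w) = dotv u v + dotv u w.
Proof. by rewrite /dotv -big_split; apply: eq_bigr => i _; rewrite mxE mulrDr. Qed.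

Lemma dotvZ c u v : dotv u (c *: v) = c * dotv u v.
Proof. by rewrite /dotv mulr_sumr; apply: eq_bigr => i _; rewrite mxE mulrCA. Qed.

Lemma dotvN u v : dotv u (- v) = - dotv u v.
Proof. by rewrite -scaleN1r dotvZ mulN1r. Qed.

Lemma dotv0 u : dotv u 0 = 0.
Proof. by rewrite /dotv big1 // => i _; rewrite mxE mulr0. Qed.

Lemma dotv_delta u i : dotv u (delta_mx i 0) = u i 0.
Proof.
rewrite /dotv (bigD1 i) //= big1 ?addr0 => [|k /negbTE k_neq_i]; rewrite mxE.
  by rewrite !eqxx mulr1.
by rewrite k_neq_i mulr0.
Qed.

End ColumnDot.

Lemma sum_addchar_dotv p m (w : 'cV['F_p]_m) :
  \sum_(u : 'cV['F_p]_m) addchar (dotv u w) = (w == 0)%:R * #|'cV['F_p]_m|%:R.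
Proof.
have [->|w_neq0] := eqVneq w 0.
  by rewrite mul1r (eq_bigr (fun _ => 1)) ?sumr_const // => u _; rewrite dotv0 addchar0.
rewrite mul0r; have [i wi_neq0] : exists i, w i 0 != 0.
  apply/existsP; apply: contraNT w_neq0 => /existsPn w0; apply/eqP/matrixP => i j.
  by rewrite ord1 mxE; apply/eqP/negbNE/w0.
pose s := (w i 0)^-1 *: delta_mx i 0 : 'cV['F_p]_m.
apply: (sum_eq0_rot (addchar1_neq1 p) (addIr s)) => u /=.
by rewrite dotvC dotvD dotvC addcharD mulrC /s dotvZ dotv_delta mulVf.
Qed.

Section Heisenberg.
Variables p n : nat.
Implicit Types (a b h : mat p n) (v : Xsp p n).

Lemma heisP a : a \in heis p n ->
  (forall i, a i i = 1) /\
  (forall i j, i != j -> i != ord0 -> j != ord_max -> a i j = 0).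
Proof.
rewrite inE => /forallP aP; split => [i|i j i_neq_j i_neq0 j_neq_max].
  by move: (aP i) => /forallP /(_ i) /andP [/implyP /(_ (eqxx _)) /eqP].
move: (aP i) => /forallP /(_ j) /andP [_ /implyP a0]; apply/eqP/a0.
by rewrite i_neq_j i_neq0 j_neq_max.
Qed.

Lemma heis1 : 1%:M \in heis p n.
Proof.
rewrite inE; apply/forallP => i; apply/forallP => j; rewrite !mxE.
by case: (i =P j) => [->|/eqP h] /=; rewrite ?eqxx ?implybT.
Qed.

Lemma heis_col0 a i : a \in heis p n -> a i ord0 = (i == ord0)%:R.
Proof.
move=> /heisP [a_diag a0]; case: (i =P ord0) => [->|/eqP i_neq0]; first by rewrite a_diag.
by rewrite a0 // eq_sym ord0_neq_max.
Qed.

Lemma heis_mul_mid a v i : a \in heis p n -> mid i ->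
  (a *m v) i 0 = v i 0 + a i ord_max * v ord_max 0.
Proof.
move=> /heisP [a_diag a0] /andP [i_neq0 i_neq_max].
rewrite mxE (bigD1 i) //= a_diag mul1r (bigD1 ord_max) 1?eq_sym //= big1 ?addr0 //.
by move=> j /andP [j_neq_i j_neq_max]; rewrite a0 ?mul0r // eq_sym.
Qed.

Lemma heis_unitmx a : a \in heis p n -> a \in unitmx.
Proof.
move=> /heisP [a_diag a0]; rewrite unitmxE -det_tr det_trig.
  by rewrite (eq_bigr (fun _ => 1)) ?big1_eq ?unitr1 // => i _; rewrite mxE a_diag.
apply/is_trig_mxP => i j lt_ij; rewrite mxE a0 //.
- by rewrite -(inj_eq val_inj) /= gtn_eqF.
- by rewrite -(inj_eq val_inj) /= -lt0n (leq_ltn_trans _ lt_ij).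
- by rewrite -(inj_eq val_inj) /= ltn_eqF // (leq_trans lt_ij) // -ltnS.
Qed.

Lemma heis_mulmx_inj a : a \in heis p n -> injective (mulmx a : Xsp p n -> Xsp p n).
Proof. by move=> /heis_unitmx a_unit; apply: can_inj (mulKmx a_unit). Qed.

Definition heisz (t : 'F_p) : mat p n := 1%:M + t *: delta_mx ord0 ord_max.

Lemma heiszD s t : heisz s *m heisz t = heisz (s + t).
Proof.
rewrite /heisz mulmxDl !mulmxDr !mul1mx mulmx1 -!scalemxAl -!scalemxAr.
rewrite mul_delta_mx_0 1?eq_sym ?ord0_neq_max // !scaler0 addr0 scalerDl.
by rewrite addrA -!addrA; congr (_ + _); rewrite addrC.
Qed.

Lemma heisz0 : heisz 0 = 1%:M.
Proof. by rewrite /heisz scale0r addr0. Qed.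

Lemma heisz_center t : heisz t \in heisH p n.
Proof.
rewrite inE; apply/andP; split; rewrite ?inE; apply/forallP => i; apply/forallP => j;
  rewrite !mxE.
  case: (i =P j) => [->|/eqP h] /=; first by rewrite ord0_max_false mulr0 addr0 eqxx.
  by apply/implyP => /andP [i_neq0 _]; rewrite (negbTE i_neq0) mulr0 addr0.
by case: (i =P j) => [->|/eqP h] //=; apply/implyP => /negbTE ->; rewrite mulr0 addr0.
Qed.

Lemma center_heisz h : h \in heisH p n -> h = heisz (h ord0 ord_max).
Proof.
rewrite inE => /andP [/heisP [h_diag _] /forallP h0]; apply/matrixP => i j; rewrite !mxE.
case: (i =P j) => [->|/eqP i_neq_j] /=; first by rewrite h_diag ord0_max_false mulr0 addr0.
case corner: ((i == ord0) && (j == ord_max)).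
  by case/andP: corner => /eqP -> /eqP ->; rewrite mulr1 add0r.
move: (h0 i) => /forallP /(_ j) /implyP.
by rewrite i_neq_j corner mulr0 addr0 => /(_ isT) /eqP.
Qed.

Lemma lcoset_mul_heisz a t : Defs.lcoset (a *m heisz t) = Defs.lcoset a.
Proof.
apply/setP => b; apply/imsetP/imsetP => [[h hH ->]|[h hH ->]].
  by exists (heisz t *m h); rewrite ?mulmxA // (center_heisz hH) heiszD heisz_center.
exists (heisz (- t) *m h); first by rewrite (center_heisz hH) heiszD heisz_center.
by rewrite !mulmxA -(mulmxA a) heiszD addrN heisz0 mulmx1.
Qed.

Lemma heis_eq_mul_heisz a b : a \in heis p n -> b \in heis p n ->
  (forall i, mid i -> a i ord_max = b i ord_max) ->
  (forall j, mid j -> a ord0 j = b ord0 j) ->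
  b = a *m heisz (b ord0 ord_max - a ord0 ord_max).
Proof.
move=> aG bG eq_col eq_row; have [a_diag a0] := heisP aG; have [b_diag b0] := heisP bG.
have a_corner : a *m delta_mx ord0 ord_max = delta_mx ord0 (ord_max : 'I_n.+2).
  apply/matrixP => i j; rewrite !mxE (bigD1 ord0) //= big1 => [|k k_neq0].
    by rewrite !mxE eqxx heis_col0 // addr0 -natrM mulnb.
  by rewrite mxE (negbTE k_neq0) mulr0.
rewrite /heisz mulmxDr mulmx1 -scalemxAr a_corner; apply/matrixP => i j; rewrite !mxE.
case: (i =P j) => [->|/eqP i_neq_j]; first by rewrite a_diag b_diag ord0_max_false mulr0 addr0.
case: (i =P ord0) => [ei|/eqP i_neq0].
  subst i; case: (j =P ord_max) => [->|/eqP j_neq_max] /=.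
    by rewrite mulr1 addrC subrK.
  by rewrite mulr0 addr0 eq_row // /mid eq_sym i_neq_j.
rewrite /= mulr0 addr0; case: (j =P ord_max) => [ej|/eqP j_neq_max].
  by subst j; rewrite eq_col // /mid i_neq0 i_neq_j.
by rewrite a0 ?b0.
Qed.

End Heisenberg.

Section HilbertSpace.
Variable T : finType.
Implicit Types (v : T -> algC) (U : T -> T -> algC).

Lemma sum_eqb_mul (a b : T) :
  \sum_x ((x == a)%:R * (x == b)%:R : algC) = (a == b)%:R.
Proof.
rewrite (bigD1 a) //= big1 ?addr0 => [|x /negbTE ->]; last by rewrite mul0r.
by rewrite eqxx mul1r.
Qed.

Lemma sum_enum_val (F : T -> algC) : \sum_(k < #|T|) F (enum_val k) = \sum_x F x.
Proof.
rewrite (reindex enum_rank) /=; last by exists enum_val => x _; rewrite ?enum_rankK ?enum_valK.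
by apply: eq_bigr => x _; rewrite enum_rankK.
Qed.

Lemma dotp_unitary U v : q_unitary U -> dotp (opapp U v) (opapp U v) = dotp v v.
Proof.
move=> U_unitary; rewrite /dotp /opapp.
transitivity (\sum_i \sum_j \sum_k (((U i j)^* * U i k) * ((v j)^* * v k))).
  apply: eq_bigr => i _; rewrite rmorph_sum mulr_suml; apply: eq_bigr => j _.
  by rewrite mulr_sumr; apply: eq_bigr => k _; rewrite rmorphM /=; ring.
rewrite exchange_big; apply: eq_bigr => j _; rewrite exchange_big.
rewrite (bigD1 j) //= -mulr_suml U_unitary eqxx mul1r big1 ?addr0 // => k k_neq_j.
by rewrite -mulr_suml U_unitary eq_sym (negbTE k_neq_j) mul0r.
Qed.

Lemma conj_inv_sqrtC (r : algC) : 0 <= r -> ((sqrtC r)^-1)^* = (sqrtC r)^-1.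
Proof. by move=> r_ge0; apply/conj_Creal/ger0_real; rewrite invr_ge0 sqrtC_ge0. Qed.

Lemma inv_sqrtC_sqr (r : algC) : 0 < r -> (sqrtC r)^-1 * (sqrtC r)^-1 * r = 1.
Proof. by move=> r_gt0; rewrite -expr2 exprVn sqrtCK mulVf // gt_eqF. Qed.

Definition normalize v : T -> algC := fun x => (sqrtC (dotp v v))^-1 * v x.

Lemma normalize_unit_vec v : 0 < dotp v v -> q_unit_vec (normalize v).
Proof.
move=> v_gt0; rewrite /q_unit_vec {1}/dotp /normalize.
under eq_bigr do rewrite rmorphM /= conj_inv_sqrtC ?ltW // mulrACA.
by rewrite -mulr_sumr inv_sqrtC_sqr.
Qed.

End HilbertSpace.

Lemma piI_unitary p n N (a : mat p n) :
  injective (mulmx a : Xsp p n -> Xsp p n) -> q_unitary (@piI p n N a).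
Proof.
move=> a_inj [v k] [w l]; rewrite /piI /=.
have pair_eqE (x : Xsp p n * 'I_N) y m : (x == (y, m)) = (x.1 == y) && (x.2 == m).
  by case: x.
under eq_bigr do rewrite conjC_nat -!pair_eqE.
by rewrite sum_eqb_mul xpair_eqE (inj_eq a_inj) -xpair_eqE.
Qed.

Section Algorithm.
Variables p n : nat.
Local Notation N := #|Xsp p n|.
Local Notation Idx := (Xsp p n * 'I_N)%type.
Implicit Types (a b : mat p n) (v s : Xsp p n).

Definition label (k : 'I_N) : Xsp p n := enum_val k.

(* U_1 subtracts the middle of the ancilla label from the register, then
   Fourier transforms the ancilla over Z_p^(n+2). *)
Definition fourier (y x : Idx) : algC :=
  (sqrtC N%:R)^-1 *
  ((y.1 == x.1 - midv (label x.2))%:R * addchar (dotv (label y.2) (label x.2))).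

Lemma fourier_unitary : q_unitary fourier.
Proof.
move=> [v k] [w l] /=; have N_gt0 : 0 < N%:R :> algC by rewrite ltr0n; apply/card_gt0P; exists 0.
pose c : algC := (sqrtC N%:R)^-1; pose A := v - midv (label k); pose B := w - midv (label l).
have termE (x : Idx) : (fourier x (v, k))^* * fourier x (w, l) =
    ((x.1 == A)%:R * (x.1 == B)%:R) * (c * c * addchar (dotv (label x.2) (label l - label k))).
  rewrite /fourier !rmorphM /= conjC_nat conj_addchar conj_inv_sqrtC ?ltW //.
  by rewrite dotvD dotvN addcharD /c /A /B; ring.
rewrite (eq_bigr _ (fun x _ => termE x)) -(pair_bigA _ (fun x1 x2 =>
  ((x1 == A)%:R * (x1 == B)%:R) * (c * c * addchar (dotv (label x2) (label l - label k))))).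
under eq_bigr do rewrite -mulr_sumr.
rewrite -mulr_suml sum_eqb_mul -mulr_sumr.
rewrite (sum_enum_val (fun u => addchar (dotv u (label l - label k)))) sum_addchar_dotv.
rewrite subr_eq0 (inj_eq enum_val_inj) [l == k]eq_sym xpair_eqE.
have [k_eq_l|k_neq_l] := eqVneq k l; last by rewrite andbF mul0r !mulr0.
by subst l; rewrite andbT mul1r /A /B (inj_eq (addIr _)) /c inv_sqrtC_sqr // mulr1.
Qed.

Definition psi_raw (x : Idx) : algC :=
  ((x.1 ord_max 0 == 1) && (label x.2 == midv x.1))%:R * addchar (x.1 ord0 0).

Definition psi_in : Idx -> algC := normalize psi_raw.

Lemma psi_in_unit : q_unit_vec psi_in.
Proof.
apply: normalize_unit_vec; pose e : Xsp p n := delta_mx ord_max 0.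
rewrite /dotp (bigD1 (e, enum_rank (midv e))) //=.
have -> : psi_raw (e, enum_rank (midv e)) = 1.
  by rewrite /psi_raw /label /= enum_rankK !mxE !eqxx /= mul1r addchar0.
rewrite conjC1 mul1r; apply: (lt_le_trans ltr01); rewrite lerDl.
by apply: sumr_ge0 => x _; rewrite mulrC mul_conjC_ge0.
Qed.

Definition psi_out a : Idx -> algC := psi_a fourier psi_in a.

Definition psi_out_term a (y : Idx) (x : Idx * Idx) : algC :=
  fourier y x.1 * (piI a x.1 x.2 * psi_in x.2).

Lemma psi_outE a y : psi_out a y = \sum_x psi_out_term a y x.
Proof. by rewrite /psi_out /psi_a /opapp; under eq_bigr do rewrite mulr_sumr; rewrite pair_bigA. Qed.

Lemma psi_out_term_neq0 a w k x : psi_out_term a (w, k) x != 0 ->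
  [/\ w = x.1.1 - midv (label x.1.2), x.1.1 = a *m x.2.1, x.1.2 = x.2.2,
      x.2.1 ord_max 0 = 1 & label x.2.2 = midv x.2.1].
Proof.
case: x => [[v1 k1] [v2 k2]]; rewrite /psi_out_term /fourier /piI /psi_in /normalize /psi_raw /=.
rewrite !mulf_eq0 !pnatr_eq0 !eqb0 !negb_or !negbK.
by case/and5P => /and3P [_ /eqP -> _] /andP [/eqP -> /eqP ->] _ /andP [/eqP -> /eqP ->] _.
Qed.

Lemma psi_out_register a w k i : a \in heis p n -> psi_out a (w, k) != 0 -> mid i ->
  w i 0 = a i ord_max.
Proof.
move=> aG; rewrite psi_outE => out_neq0 mid_i; apply/eqP; apply: contraNT out_neq0 => w_neq.
apply/eqP/big1 => x _; apply/eqP; apply: contraNT w_neq.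
case/psi_out_term_neq0 => -> -> -> last1 ->; rewrite midv_id [X in X == _]mxE heis_mul_mid // !mxE.
by rewrite last1 mulr1 mid_i addrC addKr.
Qed.

Definition shift_idx (u m : Xsp p n) (x : Idx) : Idx :=
  (x.1 + u, enum_rank (label x.2 + m)).

Lemma shift_idx_inj u m : injective (shift_idx u m).
Proof.
move=> [v k] [w l]; rewrite /shift_idx /label => -[/addIr -> /enum_rank_inj/addIr].
by move/enum_val_inj ->.
Qed.

Lemma psi_out_term_shift a y s x : a *m s = midv s -> s ord_max 0 = 0 ->
  psi_out_term a y (shift_idx (midv s) (midv s) x.1, shift_idx s (midv s) x.2) =
  addchar (s ord0 0 + dotv (label y.2) (midv s)) * psi_out_term a y x.
Proof.
move=> as_mid s_max; case: x => [[v1 k1] [v2 k2]].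
rewrite /psi_out_term /fourier /piI /psi_in /normalize /psi_raw /shift_idx /label /=.
rewrite !enum_rankK midvD midv_id opprD addrACA subrr addr0.
rewrite mulmxDr as_mid (inj_eq (addIr _)) (inj_eq enum_rank_inj) (inj_eq (addIr _)).
rewrite (inj_eq enum_val_inj) midvD (inj_eq (addIr _)) [(v2 + s) _ _]mxE s_max addr0.
by rewrite [(v2 + s) _ _]mxE dotvD !addcharD; ring.
Qed.

Lemma exists_phase_shift a i (l : Xsp p n) : a \in heis p n -> mid i -> l i 0 != a ord0 i ->
  exists s, [/\ a *m s = midv s, s ord_max 0 = 0 & s ord0 0 + dotv l (midv s) = 1].
Proof.
move=> aG mid_i l_neq; have [a_diag a0] := heisP aG; have /andP [i_neq0 i_neq_max] := mid_i.
pose r := (l i 0 - a ord0 i)^-1; pose t := - (r * a ord0 i).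
have r_inv : r * (l i 0 - a ord0 i) = 1 by rewrite mulVf // subr_eq0.
exists (t *: delta_mx ord0 0 + r *: delta_mx i 0).
have midE : midv (t *: delta_mx ord0 0 + r *: delta_mx i 0) = r *: delta_mx i 0.
  by rewrite midvD !midvZ midv_delta0 midv_delta // scaler0 add0r.
rewrite midE; split.
- rewrite mulmxDr -!scalemxAr -!colE; apply/matrixP => k j; rewrite ord1 !mxE heis_col0 //.
  case: (k =P ord0) => [->|/eqP k_neq0].
    by rewrite eq_sym (negbTE i_neq0) mulr1 mulr0 /t addNr.
  rewrite /= mulr0 add0r; case: (k =P i) => [->|/eqP k_neq_i]; first by rewrite a_diag eqxx.
  by rewrite a0 // (negbTE k_neq_i) mulr0.
- by rewrite !mxE eq_sym (negbTE (ord0_neq_max n)) /= eq_sym (negbTE i_neq_max) !mulr0 addr0.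
- rewrite dotvZ dotv_delta !mxE eqxx /= eq_sym (negbTE i_neq0) mulr1 mulr0 addr0 /t.
  by rewrite -r_inv mulrBr addrC.
Qed.

Lemma psi_out_label a w k i : a \in heis p n -> psi_out a (w, k) != 0 -> mid i ->
  label k i 0 = a ord0 i.
Proof.
move=> aG out_neq0 mid_i; apply/eqP; apply: contraNT out_neq0 => label_neq.
have [s [as_mid s_max phase1]] := exists_phase_shift aG mid_i label_neq.
rewrite psi_outE; apply/eqP.
pose h x := (shift_idx (midv s) (midv s) x.1, shift_idx s (midv s) x.2).
apply: (sum_eq0_rot (addchar1_neq1 p) (h := h)).
  move=> [x1 x2] [y1 y2] /eqP; rewrite /h /= xpair_eqE !(inj_eq (@shift_idx_inj _ _)).
  by case/andP => /eqP -> /eqP ->.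
by move=> x; rewrite psi_out_term_shift // phase1.
Qed.

Lemma psi_out_unit a : a \in heis p n -> q_unit_vec (psi_out a).
Proof.
move=> aG; rewrite /q_unit_vec /psi_out /psi_a (dotp_unitary _ fourier_unitary).
by rewrite (dotp_unitary _ (piI_unitary (heis_mulmx_inj aG))); apply: psi_in_unit.
Qed.

(* By psi_out_register and psi_out_label, all cosets with a nonzero amplitude
   at y coincide. *)
Definition decode (y : Idx) : {set mat p n} :=
  if [pick b in heis p n | psi_out b y != 0] is Some b then Defs.lcoset b
  else Defs.lcoset 1%:M.

Lemma decode_coset y : decode y \in cosetsH p n.
Proof.
rewrite /decode; case: pickP => [b /andP [bG _]|_]; apply/imsetP; first by exists b.
by exists 1%:M; rewrite ?heis1.
Qed.

Lemma decode_psi_out a y : a \in heis p n -> psi_out a y != 0 -> decode y = Defs.lcoset a.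
Proof.
move=> aG a_neq0; rewrite /decode; case: pickP => [b /andP [bG b_neq0]|none]; last first.
  by move: (none a); rewrite aG a_neq0.
case: y a_neq0 b_neq0 => w k a_neq0 b_neq0.
rewrite (heis_eq_mul_heisz aG bG _ _) ?lcoset_mul_heisz // => i mid_i.
  by rewrite -(psi_out_register aG a_neq0 mid_i) (psi_out_register bG b_neq0 mid_i).
by rewrite -(psi_out_label aG a_neq0 mid_i) (psi_out_label bG b_neq0 mid_i).
Qed.

Definition measurement (c : {set mat p n}) (y x : Idx) : algC :=
  ((y == x) && (decode y == c))%:R.

Lemma opapp_measurement c (v : Idx -> algC) y :
  opapp (measurement c) v y = (decode y == c)%:R * v y.
Proof.
rewrite /opapp (bigD1 y) //= /measurement eqxx /= big1 ?addr0 // => x x_neq_y.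
by rewrite eq_sym (negbTE x_neq_y) mul0r.
Qed.

Lemma measurement_povm : q_povm (cosetsH p n) measurement.
Proof.
split=> [c _ v|y x].
  rewrite /dotp; apply: sumr_ge0 => y _; rewrite opapp_measurement mulrCA.
  by apply: mulr_ge0; rewrite ?ler0n // mulrC mul_conjC_ge0.
rewrite /measurement; case: (y =P x) => [y_eq_x|_] /=; last by rewrite big1.
subst x.
rewrite (bigD1 (decode y)) ?decode_coset //= eqxx big1 ?addr0 // => c /andP [_ c_neq].
by rewrite eq_sym (negbTE c_neq).
Qed.

Lemma measurement_success a : a \in heis p n ->
  dotp (psi_out a) (opapp (measurement (Defs.lcoset a)) (psi_out a)) = 1.
Proof.
move=> aG; rewrite -(psi_out_unit aG); apply: eq_bigr => y _; rewrite opapp_measurement.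
have [->|y_neq0] := eqVneq (psi_out a y) 0; first by rewrite !mulr0.
by rewrite (decode_psi_out aG y_neq0) eqxx mul1r.
Qed.

End Algorithm.

Unset Implicit Arguments.

Theorem theorem20 (p n : nat) (hp : prime p) (hn : (1 <= n)%N) :
  exists (N : nat) (psi : (Xsp p n * 'I_N) -> algC)
         (U : (Xsp p n * 'I_N) -> (Xsp p n * 'I_N) -> algC)
         (E : {set mat p n} -> (Xsp p n * 'I_N) -> (Xsp p n * 'I_N) -> algC),
    [/\ (1 <= N)%N, q_unit_vec psi, q_unitary U,
        q_povm (cosetsH p n) E & success_prob psi U E = 1].
Proof.
exists #|Xsp p n|, (@psi_in p n), (@fourier p n), (@measurement p n).
split; [by apply/card_gt0P; exists 0 | exact: psi_in_unit | exact: fourier_unitary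
       | exact: measurement_povm |].
rewrite /success_prob (eq_bigr (fun _ => 1)) => [|a aG]; last exact: measurement_success.
rewrite sumr_const mulVf // pnatr_eq0 -lt0n.
by apply/card_gt0P; exists 1%:M; apply: heis1.
Qed.
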